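(* Let $U$ be a finite set, $\alpha>1$ and $\delta\in[0,1)$. For probability distributions $P,Q$ on $U$, $e^{(\alpha-1)D^\delta_\alpha(P\|Q)}$ equals the optimal value of the program $$\min_{P',Q'} \sum_x P'(x)^\alpha Q'(x)^{1-\alpha}\quad\text{s.t.}\quad \sum_x P'(x)=\sum_x Q'(x)=1,\ 0\le P'(x)\le \tfrac{P(x)}{1-\delta},\ 0\le Q'(x)\le\tfrac{Q(x)}{1-\delta}\ \ \forall x,$$ the objective is jointly convex in $(P,Q,P',Q')$ over a convex feasible set, and consequently $(P,Q)\mapsto e^{(\alpha-1)D^\delta_\alpha(P\|Q)}$ is jointly convex.
   Context: For $\alpha>1$, $D_\alpha(P\|Q)=\frac{1}{\alpha-1}\log\sum_x P(x)^\alpha Q(x)^{1-\alpha}$ (with $0^\alpha 0^{1-\alpha}=0$ and $u^\alpha 0^{1-\alpha}=\infty$ for $u>0$), and $D^\delta_\alpha(P\|Q)=\inf\{D_\alpha(P'\|Q'): P=(1-\delta)P'+\delta P'',\ Q=(1-\delta)Q'+\delta Q''\}$, the infimum over probability distributions $P',P'',Q',Q''$ on $U$. *)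

From HB Require Import structures.
From mathcomp Require Import all_boot all_order all_algebra.
From mathcomp Require Import all_classical all_reals all_analysis.
Set Implicit Arguments. Unset Strict Implicit. Unset Printing Implicit Defensive.
Import Order.TTheory GRing.Theory Num.Theory.
Local Open Scope classical_set_scope.
Local Open Scope ring_scope.

Section Renyi.
Variables (R : realType) (U : finType).

Definition is_dist (P : U -> R) : Prop :=
  (forall x, 0 <= P x) /\ \sum_(x : U) P x = 1.

Definition renyi_term (alpha : R) (u v : R) : \bar R :=
  if v == 0 then (if u == 0 then 0%E else +oo%E)
  else (u `^ alpha * v `^ (1 - alpha))%:E.

Definition renyi_sum (alpha : R) (P Q : U -> R) : \bar R :=
  (\sum_(x : U) renyi_term alpha (P x) (Q x))%E.

Definition renyiD (alpha : R) (P Q : U -> R) : \bar R :=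
  (((alpha - 1)^-1)%:E * lne (renyi_sum alpha P Q))%E.

Definition renyiD_smooth (alpha delta : R) (P Q : U -> R) : \bar R :=
  ereal_inf [set d | exists P' P'' Q' Q'' : U -> R,
    [/\ is_dist P' /\ is_dist P'' /\ is_dist Q' /\ is_dist Q'',
        (forall x, P x = (1 - delta) * P' x + delta * P'' x),
        (forall x, Q x = (1 - delta) * Q' x + delta * Q'' x)
      & d = renyiD alpha P' Q']].

Definition feasible (delta : R) (P Q P' Q' : U -> R) : Prop :=
  [/\ \sum_(x : U) P' x = 1, \sum_(x : U) Q' x = 1,
      (forall x, 0 <= P' x <= P x / (1 - delta))
    & (forall x, 0 <= Q' x <= Q x / (1 - delta))].

Definition program_value (alpha delta : R) (P Q : U -> R) : \bar R :=
  ereal_inf [set v | exists P' Q' : U -> R,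
     feasible delta P Q P' Q' /\ v = renyi_sum alpha P' Q'].

Definition mix (l : R) (f g : U -> R) : U -> R := fun x => l * f x + (1 - l) * g x.

End Renyi.

From HB Require Import structures.
From mathcomp Require Import all_boot all_order all_algebra.
From mathcomp Require Import all_classical all_reals all_analysis.
From mathcomp Require Import ring lra.
Import Order.TTheory GRing.Theory Num.Theory.
Local Open Scope classical_set_scope.
Local Open Scope ring_scope.

(* Writing P = (1 - delta) P' + delta P'' with P'' a distribution is possible
   exactly when 0 <= P' <= P / (1 - delta) (take P'' = (P - (1 - delta) P') / delta),
   so the smoothed divergence is (alpha - 1)^-1 lne of the optimal value of the
   program, and expeR((alpha - 1) _) undoes this monotone transformation.
   Each summand u^alpha v^(1-alpha) = v (u/v)^alpha is the perspective of the
   convex map t |-> t^alpha, hence jointly convex, and the feasible set depends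
   convexly on (P, Q, P', Q'); minimizing a jointly convex function over such a
   set yields a convex function of (P, Q). *)

Section RenyiTerm.
Context {R : realType}.
Implicit Types (alpha a b t u v x y : R).

Lemma powR_convex_comb alpha t x y : 1 <= alpha -> 0 <= t <= 1 ->
  0 <= x -> 0 <= y ->
  (t * x + (1 - t) * y) `^ alpha <= t * x `^ alpha + (1 - t) * y `^ alpha.
Proof.
move=> alpha1 /andP[t0 t1] x0 y0.
have := @convex_powR R alpha alpha1 (Itv01 t0 t1) x y.
by rewrite !inE /= !in_itv /= !andbT => /(_ x0 y0); rewrite !convRE.
Qed.

Lemma powR_perspective alpha u v : 0 <= u -> 0 < v ->
  u `^ alpha * v `^ (1 - alpha) = v * (u / v) `^ alpha.
Proof.
move=> u0 v0.
rewrite powRM //; last by rewrite invr_ge0 ltW.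
rewrite -powR_inv1 ?ltW // -powRrM mulN1r.
rewrite powRD; last by apply/implyP => _; rewrite gt_eqF.
by rewrite powRr1 ?ltW // mulrCA.
Qed.

Lemma powR_perspective_convex alpha a b u1 v1 u2 v2 :
  1 <= alpha -> 0 < a -> 0 < b -> a + b = 1 ->
  0 <= u1 -> 0 < v1 -> 0 <= u2 -> 0 < v2 ->
  (a * u1 + b * u2) `^ alpha * (a * v1 + b * v2) `^ (1 - alpha) <=
   a * (u1 `^ alpha * v1 `^ (1 - alpha)) + b * (u2 `^ alpha * v2 `^ (1 - alpha)).
Proof.
move=> alpha1 a0 b0 ab u10 v10 u20 v20.
set v := a * v1 + b * v2.
have v0 : 0 < v by rewrite addr_gt0 // mulr_gt0.
rewrite !powR_perspective //; last by rewrite addr_ge0 // mulr_ge0 // ltW.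
(* the weights of the convex combination of the ratios u_i / v_i *)
set t := a * v1 / v.
have t1E : 1 - t = b * v2 / v by rewrite /t /v; field; rewrite gt_eqF.
have t01 : 0 <= t <= 1.
  rewrite /t divr_ge0 ?mulr_ge0 ?(ltW a0) ?(ltW v10) ?(ltW v0) //=.
  by rewrite ler_pdivrMr // mul1r lerDl mulr_ge0 // ltW.
have -> : (a * u1 + b * u2) / v = t * (u1 / v1) + (1 - t) * (u2 / v2).
  by rewrite t1E /t /v; field; rewrite !gt_eqF.
apply: le_trans (_ : v * (t * (u1 / v1) `^ alpha + (1 - t) * (u2 / v2) `^ alpha) <= _).
  rewrite ler_pM2l // powR_convex_comb //.
  - exact: divr_ge0 u10 (ltW v10).
  - exact: divr_ge0 u20 (ltW v20).
rewrite t1E /t mulrDr.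
by apply: lerD; rewrite le_eqVlt; apply/predU1l; field; rewrite gt_eqF.
Qed.

Lemma renyi_term_ge0 alpha u v : (0 <= @renyi_term R alpha u v)%E.
Proof.
rewrite /renyi_term; case: ifP => _; first by case: ifP.
by rewrite lee_fin mulr_ge0 // powR_ge0.
Qed.

Lemma renyi_term00 alpha : @renyi_term R alpha 0 0 = 0%E.
Proof. by rewrite /renyi_term eqxx. Qed.

Lemma renyi_termy alpha u : u != 0 -> @renyi_term R alpha u 0 = +oo%E.
Proof. by move=> u_neq0; rewrite /renyi_term eqxx (negbTE u_neq0). Qed.

Lemma renyi_termE alpha u v : v != 0 ->
  @renyi_term R alpha u v = (u `^ alpha * v `^ (1 - alpha))%:E.
Proof. by move=> v_neq0; rewrite /renyi_term (negbTE v_neq0). Qed.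

Lemma renyi_termZ alpha b u v : 0 < b -> 0 <= u -> 0 <= v ->
  renyi_term alpha (b * u) (b * v) = (b%:E * renyi_term alpha u v)%E.
Proof.
move=> b0 u0 v0.
have b_neq0 : b != 0 by rewrite gt_eqF.
rewrite /renyi_term !mulf_eq0 (negbTE b_neq0) /=.
case: (v == 0); last first.
  rewrite -EFinM !powRM ?(ltW b0) // mulrACA -powRD; last by rewrite b_neq0 implybT.
  by rewrite addrC subrK powRr1 ?(ltW b0).
by case: (u == 0); rewrite ?mule0 ?gt0_muley ?lte_fin.
Qed.

Lemma renyi_term_mix_zero alpha a b u1 u2 v2 : 0 < a -> 0 < b ->
  0 <= u2 -> 0 <= v2 ->
  (renyi_term alpha (a * u1 + b * u2) (a * 0 + b * v2) <=
   a%:E * renyi_term alpha u1 0 + b%:E * renyi_term alpha u2 v2)%E.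
Proof.
move=> a0 b0 u20 v20.
have [->|u1_neq0] := eqVneq u1 0.
  by rewrite mulr0 !add0r renyi_term00 mule0 add0e renyi_termZ.
rewrite renyi_termy // gt0_muley ?lte_fin // addye ?leey // -ltNye.
by apply: (lt_le_trans ltNy0); rewrite mule_ge0 ?renyi_term_ge0 // lee_fin ltW.
Qed.

Lemma renyi_term_convex alpha a b u1 v1 u2 v2 :
  1 <= alpha -> 0 < a -> 0 < b -> a + b = 1 ->
  0 <= u1 -> 0 <= v1 -> 0 <= u2 -> 0 <= v2 ->
  (renyi_term alpha (a * u1 + b * u2) (a * v1 + b * v2) <=
   a%:E * renyi_term alpha u1 v1 + b%:E * renyi_term alpha u2 v2)%E.
Proof.
move=> alpha1 a0 b0 ab u10 v10 u20 v20.
have [->|v1_neq0] := eqVneq v1 0; first exact: renyi_term_mix_zero.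
have [->|v2_neq0] := eqVneq v2 0.
  by rewrite [X in renyi_term _ X]addrC [X in renyi_term _ _ X]addrC addeC
    renyi_term_mix_zero.
have v1_gt0 : 0 < v1 by rewrite lt_def v1_neq0.
have v2_gt0 : 0 < v2 by rewrite lt_def v2_neq0.
rewrite !renyi_termE ?gt_eqF ?addr_gt0 ?mulr_gt0 // -!EFinM -EFinD lee_fin.
exact: powR_perspective_convex.
Qed.

End RenyiTerm.

Section ErealInf.
Context {R : realType}.

Lemma lb_ereal_inf_scaleD (k : R) (S : set (\bar R)) (c z : \bar R) : 0 < k ->
  (forall s, S s -> 0 <= s)%E -> (0 <= c)%E ->
  (forall s, S s -> z <= k%:E * s + c)%E -> (z <= k%:E * ereal_inf S + c)%E.
Proof.
move=> k0 S0 c0 zS.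
have inf0 : (0 <= ereal_inf S)%E by apply: le_ereal_inf_tmp => s /S0.
have kinf0 : (0 <= k%:E * ereal_inf S)%E by rewrite mule_ge0 // lee_fin ltW.
case: c c0 zS => [r| |] // c0 zS; last first.
  by rewrite addey ?leey // gt_eqF // (lt_le_trans _ kinf0) ?ltNy0.
case: z zS => [z| |] zS; last exact: leNye.
- have lb : (((z - r) / k)%:E <= ereal_inf S)%E.
    apply: le_ereal_inf_tmp => s Ss; have := zS s Ss; have := S0 s Ss.
    case: s Ss => [s| |] // _ _; last by rewrite leey.
    rewrite -EFinM -EFinD !lee_fin => zs.
    by rewrite ler_pdivrMr // mulrC; lra.
  move: lb inf0; case: (ereal_inf S) => [y| |] // lb _.
    by move: lb; rewrite -EFinM -EFinD !lee_fin ler_pdivrMr // mulrC; lra.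
  by rewrite gt0_muley ?lte_fin // addye // leey.
- have -> : ereal_inf S = +oo%E.
    apply/ereal_inf_pinfty => s Ss; have := zS s Ss; have := S0 s Ss.
    by case: s Ss => [x| |] //; rewrite -EFinM -EFinD.
  by rewrite gt0_muley ?lte_fin // addye // leey.
Qed.

Lemma lb_ereal_inf_scaleD2 (a b : R) (S T : set (\bar R)) (z : \bar R) :
  0 < a -> 0 < b ->
  (forall s, S s -> 0 <= s)%E -> (forall t, T t -> 0 <= t)%E ->
  (forall s t, S s -> T t -> z <= a%:E * s + b%:E * t)%E ->
  (z <= a%:E * ereal_inf S + b%:E * ereal_inf T)%E.
Proof.
move=> a0 b0 S0 T0 zST.
have infT0 : (0 <= ereal_inf T)%E by apply: le_ereal_inf_tmp => t /T0.
apply: lb_ereal_inf_scaleD => //; first by rewrite mule_ge0 // lee_fin ltW.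
move=> s Ss; rewrite addeC; apply: lb_ereal_inf_scaleD => //.
  by rewrite mule_ge0 ?(S0 _ Ss) // lee_fin ltW.
by move=> t Tt; rewrite addeC; apply: zST.
Qed.

Lemma expeR_ereal_inf_scale_lne (c : R) (B : set (\bar R)) : 0 < c ->
  (forall s, B s -> 0 <= s)%E ->
  expeR (c%:E * ereal_inf ((fun s => ((c^-1)%:E * lne s)%E) @` B))%E
  = ereal_inf B.
Proof.
move=> c0 B0.
set f := fun s => ((c^-1)%:E * lne s)%E.
set g := fun y => expeR (c%:E * y)%E.
have gK s : (0 <= s)%E -> g (f s) = s.
  move=> s0; rewrite /g /f muleA -EFinM mulfV ?gt_eqF // mul1e.
  by rewrite lneK // in_itv /= s0 leey.
have f_mono (s t : \bar R) : (0 <= s)%E -> (s <= t)%E -> (f s <= f t)%E.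
  move=> s0 st; rewrite /f lee_pmul2l ?lte_fin ?invr_gt0 //.
  by rewrite lee_lne // in_itv /= ?s0 ?(le_trans s0 st) leey.
have g_mono y z : (y <= z)%E -> (g y <= g z)%E.
  by move=> yz; rewrite /g lee_expeR lee_pmul2l // lte_fin.
have inf0 : (0 <= ereal_inf B)%E by apply: le_ereal_inf_tmp => s /B0.
rewrite -/(g _); apply/le_anti/andP; split.
- apply: le_ereal_inf_tmp => s Bs.
  by rewrite -(gK s (B0 _ Bs)); apply/g_mono/ereal_inf_lbound; exists s.
- rewrite -{1}(gK _ inf0); apply/g_mono/le_ereal_inf_tmp => _ [s Bs <-].
  exact/f_mono/ereal_inf_lbound.
Qed.

End ErealInf.

Section SmoothedRenyi.
Context {R : realType} {U : finType}.
Implicit Types (alpha delta l : R) (P Q : U -> R).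

Lemma renyi_sum_ge0 alpha P Q : (0 <= renyi_sum alpha P Q)%E.
Proof. by apply: sume_ge0 => x _; exact: renyi_term_ge0. Qed.

Lemma mix0 (f g : U -> R) : mix 0 f g = g.
Proof. by apply/funext => x; rewrite /mix mul0r add0r subr0 mul1r. Qed.

Lemma mix1 (f g : U -> R) : mix 1 f g = f.
Proof. by apply/funext => x; rewrite /mix mul1r subrr mul0r addr0. Qed.

Lemma sum_mix_eq1 l (f g : U -> R) :
  \sum_(x : U) f x = 1 -> \sum_(x : U) g x = 1 -> \sum_(x : U) mix l f g x = 1.
Proof.
by move=> f1 g1; rewrite /mix big_split /= -!mulr_sumr f1 g1 !mulr1 addrC subrK.
Qed.

Lemma mix_ge0 l (f g : U -> R) x : 0 <= l <= 1 -> 0 <= f x -> 0 <= g x ->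
  0 <= mix l f g x.
Proof. by case/andP=> l0 l1 f0 g0; rewrite addr_ge0 // mulr_ge0 // subr_ge0. Qed.

Lemma is_dist_mix l P1 P2 : 0 <= l <= 1 -> is_dist P1 -> is_dist P2 ->
  is_dist (mix l P1 P2).
Proof.
move=> l01 [P10 P1s] [P20 P2s]; split; first by move=> x; apply: mix_ge0.
exact: sum_mix_eq1.
Qed.

Lemma feasible_ge0 {delta} {P Q P' Q' : U -> R} : feasible delta P Q P' Q' ->
  (forall x, 0 <= P' x) /\ (forall x, 0 <= Q' x).
Proof. by case=> _ _ P'b Q'b; split=> x; [case/andP: (P'b x)|case/andP: (Q'b x)]. Qed.

Lemma feasible_mix delta l (P1 Q1 P1' Q1' P2 Q2 P2' Q2' : U -> R) :
  0 <= l <= 1 ->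
  feasible delta P1 Q1 P1' Q1' -> feasible delta P2 Q2 P2' Q2' ->
  feasible delta (mix l P1 P2) (mix l Q1 Q2) (mix l P1' P2') (mix l Q1' Q2').
Proof.
move=> l01 [P1's Q1's P1'b Q1'b] [P2's Q2's P2'b Q2'b].
have /andP[l0 l1] := l01.
have mix_bound (f g f' g' : U -> R) x : 0 <= f' x <= f x / (1 - delta) ->
    0 <= g' x <= g x / (1 - delta) ->
    0 <= mix l f' g' x <= mix l f g x / (1 - delta).
  case/andP=> f'0 f'b /andP[g'0 g'b]; rewrite mix_ge0 //=.
  by rewrite /mix [in X in _ <= X]mulrDl -!mulrA lerD // ler_wpM2l // subr_ge0.
by split=> [||x|x]; [exact: sum_mix_eq1 | exact: sum_mix_eq1 | exact: mix_bound ..].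
Qed.

Lemma le_mix_interior (F : (U -> R) -> (U -> R) -> \bar R) l P1 Q1 P2 Q2 :
  0 <= l <= 1 ->
  (0 < l < 1 -> (F (mix l P1 P2) (mix l Q1 Q2)
                   <= l%:E * F P1 Q1 + (1 - l)%:E * F P2 Q2)%E) ->
  (F (mix l P1 P2) (mix l Q1 Q2) <= l%:E * F P1 Q1 + (1 - l)%:E * F P2 Q2)%E.
Proof.
case/andP=> l0 l1 Finterior.
have [->|l_neq0] := eqVneq l 0; first by rewrite !mix0 mul0e add0e subr0 mul1e.
have [->|l_neq1] := eqVneq l 1; first by rewrite !mix1 mul1e subrr mul0e adde0.
by apply: Finterior; rewrite !lt_def l_neq0 l0 eq_sym l_neq1 l1.
Qed.

Lemma renyi_sum_convex alpha l P1 Q1 P2 Q2 : 1 <= alpha -> 0 <= l <= 1 ->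
  (forall x, 0 <= P1 x) -> (forall x, 0 <= Q1 x) ->
  (forall x, 0 <= P2 x) -> (forall x, 0 <= Q2 x) ->
  (renyi_sum alpha (mix l P1 P2) (mix l Q1 Q2)
     <= l%:E * renyi_sum alpha P1 Q1 + (1 - l)%:E * renyi_sum alpha P2 Q2)%E.
Proof.
move=> alpha1 l01 P10 Q10 P20 Q20.
apply: (le_mix_interior (renyi_sum alpha)) => // /andP[l0 l1].
rewrite /renyi_sum !ge0_sume_distrr; try by move=> *; exact: renyi_term_ge0.
rewrite -big_split /=; apply: lee_sum => x _.
by apply: renyi_term_convex; rewrite ?subr_gt0 // addrC subrK.
Qed.

Lemma smoothing_decompositionP delta P (P' : U -> R) :
  0 <= delta < 1 -> is_dist P ->
  (exists P'', [/\ is_dist P', is_dist P'' &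
      forall x, P x = (1 - delta) * P' x + delta * P'' x]) <->
  (\sum_(x : U) P' x = 1 /\ forall x, 0 <= P' x <= P x / (1 - delta)).
Proof.
move=> /andP[delta0 delta1] [P0 Ps].
have delta'0 : 0 < 1 - delta by rewrite subr_gt0.
split.
  move=> [P'' [[P'0 P's] [P''0 _] PE]]; split => // x.
  by rewrite P'0 /= ler_pdivlMr // PE mulrC lerDl mulr_ge0.
move=> [P's P'b]; have P'0 x : 0 <= P' x by case/andP: (P'b x).
have P'le x : (1 - delta) * P' x <= P x.
  by case/andP: (P'b x) => _; rewrite ler_pdivlMr // mulrC.
have [delta_eq0|delta_neq0] := eqVneq delta 0.
  (* for delta = 0 the constraint forces P' = P, and any P'' will do *)
  subst delta; exists P; split=> // x; rewrite subr0 mul1r mul0r addr0.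
  have PP'0 y : 0 <= P y - P' y by have := P'le y; rewrite subr0 mul1r subr_ge0.
  have : \sum_(y : U) (P y - P' y) = 0 by rewrite sumrB Ps P's subrr.
  by move/(psumr_eq0P (fun y _ => PP'0 y))/(_ x isT)/eqP; rewrite subr_eq0 => /eqP.
have delta_gt0 : 0 < delta by rewrite lt_def delta_neq0.
exists (fun x => (P x - (1 - delta) * P' x) / delta); split=> //.
  split; first by move=> x; rewrite divr_ge0 // subr_ge0.
  rewrite -mulr_suml sumrB -mulr_sumr Ps P's mulr1.
  by rewrite opprB addrC subrK mulfV.
by move=> x; field.
Qed.

Lemma renyiD_smoothE alpha delta P Q :
  0 <= delta < 1 -> is_dist P -> is_dist Q ->
  renyiD_smooth alpha delta P Q =
  ereal_inf ((fun s => (((alpha - 1)^-1)%:E * lne s)%E) @`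
    [set v | exists P' Q', feasible delta P Q P' Q' /\ v = renyi_sum alpha P' Q']).
Proof.
move=> delta01 dP dQ; congr ereal_inf; apply/seteqP; split => d.
- move=> [P' [P'' [Q' [Q'' [[dP' [dP'' [dQ' dQ'']]] PE QE ->]]]]].
  exists (renyi_sum alpha P' Q') => //.
  have [P's P'b] := (smoothing_decompositionP _ _ P' delta01 dP).1
    (ex_intro _ P'' (And3 dP' dP'' PE)).
  have [Q's Q'b] := (smoothing_decompositionP _ _ Q' delta01 dQ).1
    (ex_intro _ Q'' (And3 dQ' dQ'' QE)).
  by exists P', Q'.
- move=> [_ [P' [Q' [[P's Q's P'b Q'b] ->]]] <-].
  have [P'' [dP' dP'' PE]] :=
    (smoothing_decompositionP _ _ P' delta01 dP).2 (conj P's P'b).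
  have [Q'' [dQ' dQ'' QE]] :=
    (smoothing_decompositionP _ _ Q' delta01 dQ).2 (conj Q's Q'b).
  by exists P', P'', Q', Q''.
Qed.

Lemma renyiD_smooth_program_value alpha delta P Q :
  1 < alpha -> 0 <= delta < 1 -> is_dist P -> is_dist Q ->
  expeR ((alpha - 1)%:E * renyiD_smooth alpha delta P Q)%E
    = program_value alpha delta P Q.
Proof.
move=> alpha1 delta01 dP dQ.
rewrite renyiD_smoothE // expeR_ereal_inf_scale_lne ?subr_gt0 //.
by move=> _ [P' [Q' [_ ->]]]; exact: renyi_sum_ge0.
Qed.

Lemma program_value_convex alpha delta l P1 Q1 P2 Q2 :
  1 <= alpha -> 0 < l < 1 ->
  (program_value alpha delta (mix l P1 P2) (mix l Q1 Q2)
    <= l%:E * program_value alpha delta P1 Q1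
       + (1 - l)%:E * program_value alpha delta P2 Q2)%E.
Proof.
move=> alpha1 /andP[l0 l1].
have l01 : 0 <= l <= 1 by rewrite !ltW.
apply: lb_ereal_inf_scaleD2; rewrite ?subr_gt0 //;
  try by move=> _ [P' [Q' [_ ->]]]; exact: renyi_sum_ge0.
move=> _ _ [P1' [Q1' [f1 ->]]] [P2' [Q2' [f2 ->]]].
have [P1'0 Q1'0] := feasible_ge0 f1; have [P2'0 Q2'0] := feasible_ge0 f2.
apply: le_trans (renyi_sum_convex _ _ _ _ _ _ alpha1 l01 P1'0 Q1'0 P2'0 Q2'0).
apply: ereal_inf_lbound; exists (mix l P1' P2'), (mix l Q1' Q2'); split => //.
exact: feasible_mix.
Qed.

End SmoothedRenyi.

Theorem mainTheorem8 (R : realType) (U : finType) (alpha delta : R) :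
  1 < alpha -> 0 <= delta < 1 ->
  (forall P Q : U -> R, is_dist P -> is_dist Q ->
     expeR ((alpha - 1)%:E * renyiD_smooth alpha delta P Q)%E
       = program_value alpha delta P Q)
  /\ (forall (P1 Q1 P1' Q1' P2 Q2 P2' Q2' : U -> R) (l : R),
        0 <= l <= 1 ->
        is_dist P1 -> is_dist Q1 -> feasible delta P1 Q1 P1' Q1' ->
        is_dist P2 -> is_dist Q2 -> feasible delta P2 Q2 P2' Q2' ->
        is_dist (mix l P1 P2) /\ is_dist (mix l Q1 Q2) /\
        feasible delta (mix l P1 P2) (mix l Q1 Q2) (mix l P1' P2') (mix l Q1' Q2'))
  /\ (forall (P1 Q1 P1' Q1' P2 Q2 P2' Q2' : U -> R) (l : R),
        0 <= l <= 1 ->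
        is_dist P1 -> is_dist Q1 -> feasible delta P1 Q1 P1' Q1' ->
        is_dist P2 -> is_dist Q2 -> feasible delta P2 Q2 P2' Q2' ->
        (renyi_sum alpha (mix l P1' P2') (mix l Q1' Q2')
          <= l%:E * renyi_sum alpha P1' Q1' + (1 - l)%:E * renyi_sum alpha P2' Q2')%E)
  /\ (forall (P1 Q1 P2 Q2 : U -> R) (l : R),
        0 <= l <= 1 ->
        is_dist P1 -> is_dist Q1 -> is_dist P2 -> is_dist Q2 ->
        (expeR ((alpha - 1)%:E * renyiD_smooth alpha delta (mix l P1 P2) (mix l Q1 Q2))
          <= l%:E * expeR ((alpha - 1)%:E * renyiD_smooth alpha delta P1 Q1)
             + (1 - l)%:E * expeR ((alpha - 1)%:E * renyiD_smooth alpha delta P2 Q2))%E).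
Proof.
move=> alpha1 delta01.
have value P Q := @renyiD_smooth_program_value R U alpha delta P Q alpha1 delta01.
split; first exact: value.
split.
  move=> P1 Q1 P1' Q1' P2 Q2 P2' Q2' l l01 dP1 dQ1 f1 dP2 dQ2 f2.
  by split; [|split]; [exact: is_dist_mix ..|exact: feasible_mix].
split.
  move=> P1 Q1 P1' Q1' P2 Q2 P2' Q2' l l01 _ _ f1 _ _ f2.
  have [P1'0 Q1'0] := feasible_ge0 f1; have [P2'0 Q2'0] := feasible_ge0 f2.
  by apply: renyi_sum_convex => //; exact: ltW.
move=> P1 Q1 P2 Q2 l l01 dP1 dQ1 dP2 dQ2.
rewrite !value //; try exact: is_dist_mix.
apply: (le_mix_interior (program_value alpha delta)) => // l01'.
by apply: program_value_convex => //; exact: ltW.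
Qed.
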